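(* Let $\mathcal{L}$ and $\mathcal{K}$ be two linkages in a directed graph $G$ and let $k \ge 1$, $\alpha,\beta \ge 1$ be integers. Let $U_1,\ldots,U_k$ be walks in $G$ such that the family $(U_i)_{i=1}^k$ has congestion $\alpha$, and for each $i$ let $\mathcal{U}_i$ be the family of paths of $\mathcal{L}$ that are subpaths of $U_i$. Similarly, let $W_1,\ldots,W_k$ be walks in $G$ such that $(W_i)_{i=1}^k$ has congestion $\beta$, and let $\mathcal{W}_i$ be the family of paths of $\mathcal{K}$ that are subpaths of $W_i$. If for every $1 \le i \leq k$ the subgraph of the intersection graph $I(\mathcal{L},\mathcal{K})$ induced by $\mathcal{U}_i\cup\mathcal{W}_i$ has average degree at least $2$, then $G$ contains a family of $k$ directed cycles of congestion $\alpha +\beta$.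
   Context: For $A,B\subseteq V(G)$ with $|A|=|B|$, a linkage from $A$ to $B$ is a set of $|A|$ pairwise vertex-disjoint directed paths each starting in $A$ and ending in $B$. A family of walks/cycles is of congestion $c$ if every vertex is visited at most $c$ times in total (each visit counted separately). The intersection graph $I(\mathcal{L},\mathcal{K})$ is the bipartite graph on $\mathcal{L}\cup\mathcal{K}$ in which $L\in\mathcal{L}$ and $K\in\mathcal{K}$ are adjacent iff they share a vertex. *)

From mathcomp Require Import all_boot.
Set Implicit Arguments. Unset Strict Implicit. Unset Printing Implicit Defensive.

Section Digraphs.
Variables (V : finType) (E : rel V).

Definition walk (s : seq V) : bool :=
  if s is x :: p then path E x p else false.

Definition dipath (s : seq V) : bool := walk s && uniq s.

Definition dicycle (c : seq V) : bool :=
  [&& c != [::], uniq c & cycle E c].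

Definition subpath_of (P U : seq V) : bool := infix P U.

Definition meet (P Q : seq V) : bool := has (mem Q) P.

Definition linkage m (L : 'I_m -> seq V) : Prop :=
  (forall j, dipath (L j)) /\
  (forall j j', j != j' -> ~~ meet (L j) (L j')).

Definition congestion k (F : 'I_k -> seq V) (c : nat) : Prop :=
  forall v : V, \sum_(i < k) count_mem v (F i) <= c.

Definition sub_family m (L : 'I_m -> seq V) (U : seq V) : {set 'I_m} :=
  [set j | subpath_of (L j) U].

(* Number of edges of the intersection graph I(L,K) induced on the vertex
   set A (a subset of L) together with B (a subset of K); I(L,K) is bipartite
   with L, K as the two (disjoint) sides. *)
Definition ig_edges m n (L : 'I_m -> seq V) (K : 'I_n -> seq V)
    (A : {set 'I_m}) (B : {set 'I_n}) : nat :=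
  #|[set jl : 'I_m * 'I_n | [&& jl.1 \in A, jl.2 \in B & meet (L jl.1) (K jl.2)]]|.

(* The induced subgraph of I(L,K) on A u B has average degree at least 2:
   it is nonempty and 2|edges| / |vertices| >= 2. *)
Definition avg_deg_ge2 m n (L : 'I_m -> seq V) (K : 'I_n -> seq V)
    (A : {set 'I_m}) (B : {set 'I_n}) : Prop :=
  0 < #|A| + #|B| /\ #|A| + #|B| <= ig_edges L K A B.

End Digraphs.

From mathcomp Require Import all_boot zify.
Set Implicit Arguments. Unset Strict Implicit. Unset Printing Implicit Defensive.

(* If U ++ W spanned no directed cycle, its arcs would admit a strictly
   increasing rank h (count the vertices from which a vertex is reachable),
   so U and W would be h-increasing. A path of L that is a subpath of U then
   occupies the h-interval between its first and last vertex, disjoint paths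
   occupy disjoint intervals, and meeting paths of L and K have overlapping
   intervals. In an intersection graph of two families of pairwise disjoint
   intervals, charging each edge to the endpoint whose interval ends first is
   injective and never charges the interval that ends last, so there are fewer
   edges than vertices, contradicting average degree 2. Each U_i ++ W_i thus
   contains a directed cycle, and as a cycle visits each of its vertices once,
   these cycles have congestion at most alpha + beta. *)

Section DisjointIntervals.
Variables (I J : finType) (A : {set I}) (B : {set J}).
Variables (loA hiA : I -> nat) (loB hiB : J -> nat) (e : I -> J -> bool).
Hypothesis disjA : forall a a' t, a \in A -> a' \in A ->
  loA a <= t <= hiA a -> loA a' <= t <= hiA a' -> a = a'.
Hypothesis disjB : forall b b' t, b \in B -> b' \in B ->
  loB b <= t <= hiB b -> loB b' <= t <= hiB b' -> b = b'.
Hypothesis e_overlap : forall a b, a \in A -> b \in B -> e a b ->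
  loB b <= hiA a /\ loA a <= hiB b.

Local Notation edges := [set p : I * J | [&& p.1 \in A, p.2 \in B & e p.1 p.2]].
Let sides : {set I + J} := inl @: A :|: inr @: B.
(* Orders intervals by right end, ties broken in favour of A as in [charge]. *)
Let key (x : I + J) : nat :=
  match x with inl a => 2 * hiA a | inr b => (2 * hiB b).+1 end.
Let charge (p : I * J) : I + J := if hiA p.1 <= hiB p.2 then inl p.1 else inr p.2.

Lemma card_sides : #|sides| = #|A| + #|B|.
Proof.
rewrite cardsU !card_imset; try exact: inl_inj; try exact: inr_inj.
suff -> : inl @: A :&: inr @: B = set0 by rewrite cards0 subn0.
by apply/setP => x; rewrite !inE; apply/andP => -[/imsetP [a _ ->] /imsetP []].
Qed.

Lemma charge_in_sides p : p \in edges -> charge p \in sides.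
Proof.
case: p => a b; rewrite inE /charge /= => /and3P [aA bB _].
by case: leqP; rewrite inE imset_f ?orbT.
Qed.

Lemma charge_key_lt p : p \in edges -> exists2 y, y \in sides & key (charge p) < key y.
Proof.
case: p => a b; rewrite inE /charge /= => /and3P [aA bB _].
case: leqP => hab; [exists (inr b) | exists (inl a)];
  by rewrite /= ?inE ?imset_f ?orbT //; lia.
Qed.

Lemma charge_inj : {in edges &, injective charge}.
Proof.
move=> [a b] [a' b']; rewrite !inE /charge /=.
move=> /and3P [aA bB eab] /and3P [aA' bB' eab'].
case: leqP => hab; case: leqP => hab' // [].
all: have := e_overlap aA bB eab; have := e_overlap aA' bB' eab'.
- move=> ovl' ovl eq_a; subst a'; congr pair.
  by apply: (disjB (t := hiA a)) => //; lia.
- move=> ovl' ovl eq_b; subst b'; congr pair.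
  by apply: (disjA (t := hiB b)) => //; lia.
Qed.

Lemma card_edges_lt : 0 < #|A| + #|B| -> #|edges| < #|A| + #|B|.
Proof.
rewrite -card_sides => /card_gt0P [x0 x0_sides].
pose z := [arg max_(x > x0 in sides) key x].
have [z_sides z_max] : z \in sides /\ forall y, y \in sides -> key y <= key z.
  by rewrite /z; case: arg_maxnP.
have sub : charge @: edges \subset sides :\ z.
  apply/subsetP => _ /imsetP [p pE ->]; rewrite in_setD1 charge_in_sides // andbT.
  apply/eqP => eq_z; have [y y_sides] := charge_key_lt pE.
  by rewrite eq_z ltnNge z_max.
have := subset_leq_card sub.
by rewrite (card_in_imset charge_inj) (cardsD1 z sides) z_sides.
Qed.

End DisjointIntervals.

Section IncreasingSequences.
Variables (V : finType) (h : V -> nat).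
Local Notation increasing := (pairwise (relpre h ltn)).

Lemma mem_span d P u : increasing P -> u \in P ->
  h (head d P) <= h u <= h (last d P).
Proof.
move=> incP uP; apply/andP; split.
- case: P incP uP => // x p; rewrite pairwise_cons inE => /andP [/allP x_lt _].
  by case/predU1P => [-> // | /x_lt /ltnW].
- case/lastP: P incP uP => // p y; rewrite pairwise_rcons mem_rcons inE last_rcons.
  by case/andP => /allP lt_y _; case/predU1P => [-> // | /lt_y /ltnW].
Qed.

Lemma mem_infix_span d U P u : increasing U -> infix P U -> P != [::] ->
  u \in U -> h (head d P) <= h u <= h (last d P) -> u \in P.
Proof.
move=> incU /infixP [s [s' eqU]] nzP; subst U.
move: incU; rewrite !pairwise_cat => /and3P [lt_s _ /and3P [lt_P _ _]].
rewrite !mem_cat => /or3P [us | // | us'] /andP [lo_u u_hi].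
- have headP : head d P \in P ++ s'.
    by case: P nzP {lt_s lt_P lo_u u_hi} => //= x p _; exact: mem_head.
  by have := allrelP lt_s u _ us headP; rewrite /= ltnNge lo_u.
- have lastP : last d P \in P.
    by case: P nzP {lt_s lt_P lo_u u_hi} => //= x p _; exact: mem_last.
  by have := allrelP lt_P _ u lastP us'; rewrite /= ltnNge u_hi.
Qed.

Lemma infix_span_disjoint d U P Q t : increasing U -> infix P U -> infix Q U ->
  P != [::] -> Q != [::] -> ~~ meet P Q ->
  h (head d P) <= t <= h (last d P) -> h (head d Q) <= t <= h (last d Q) -> False.
Proof.
move=> incU.
wlog le_heads : P Q / h (head d P) <= h (head d Q).
  move=> wlog_le iP iQ nzP nzQ PQ tP tQ.
  case: (leqP (h (head d P)) (h (head d Q))) => [le | /ltnW le].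
    exact: (wlog_le P Q).
  by apply: (wlog_le Q P) => //; rewrite /meet has_sym.
move=> iP iQ nzP nzQ /hasPn PQ tP tQ.
have headQ : head d Q \in Q.
  by case: Q nzQ {iQ PQ tQ le_heads} => //= x p _; exact: mem_head.
have : head d Q \in P.
  apply: (mem_infix_span (d := d) incU iP nzP); first exact: mem_subseq (infixW iQ) _ headQ.
  lia.
by move/PQ/negP.
Qed.

Lemma meet_span_overlap d P Q : increasing P -> increasing Q -> meet P Q ->
  h (head d Q) <= h (last d P) /\ h (head d P) <= h (last d Q).
Proof.
move=> incP incQ /hasP [v vP vQ].
by have := mem_span d incP vP; have := mem_span d incQ vQ; lia.
Qed.

Lemma ig_edges_lt_increasing (d : V) m n (L : 'I_m -> seq V) (K : 'I_n -> seq V)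
    U W (A : {set 'I_m}) (B : {set 'I_n}) :
  increasing U -> increasing W ->
  (forall a, L a != [::]) -> (forall b, K b != [::]) ->
  (forall a a', a != a' -> ~~ meet (L a) (L a')) ->
  (forall b b', b != b' -> ~~ meet (K b) (K b')) ->
  (forall a, a \in A -> infix (L a) U) -> (forall b, b \in B -> infix (K b) W) ->
  0 < #|A| + #|B| -> ig_edges L K A B < #|A| + #|B|.
Proof.
move=> incU incW nzL nzK disjL disjK LU KW.
apply: (@card_edges_lt _ _ A B (fun a => h (head d (L a))) (fun a => h (last d (L a)))
  (fun b => h (head d (K b))) (fun b => h (last d (K b))) (fun a b => meet (L a) (K b))).
- move=> a a' t aA a'A ta ta'; case: (eqVneq a a') => // /disjL LL'.
  by case: (infix_span_disjoint (d := d) incU (LU a aA) (LU a' a'A) (nzL a) (nzL a')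
                                LL' ta ta').
- move=> b b' t bB b'B tb tb'; case: (eqVneq b b') => // /disjK KK'.
  by case: (infix_span_disjoint (d := d) incW (KW b bB) (KW b' b'B) (nzK b) (nzK b')
                                KK' tb tb').
- move=> a b aA bB; apply: meet_span_overlap.
  + exact: subseq_pairwise (infixW (LU a aA)) incU.
  + exact: subseq_pairwise (infixW (KW b bB)) incW.
Qed.

End IncreasingSequences.

Section CyclesAndRanks.
Variable V : finType.

Lemma dicycle_or_rank (E : rel V) : (exists c, dicycle E c) \/
  exists h : V -> nat, forall x y, E x y -> h x < h y.
Proof.
pose h x := #|[set z | connect E z x]|.
have [no_back | ] := boolP [forall x, forall y, E x y ==> ~~ connect E y x].
  right; exists h => x y Exy; apply: proper_card; apply/properP; split.
    by apply/subsetP => z; rewrite !inE => /connect_trans; apply; apply: connect1.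
  exists y; rewrite !inE ?connect0 //.
  by move/forallP/(_ x)/forallP/(_ y): no_back; rewrite Exy.
rewrite negb_forall => /existsP [x]; rewrite negb_forall => /existsP [y].
rewrite negb_imply negbK => /andP [Exy /connectP [p yp x_last]].
left; case: (shortenP yp) x_last => p' yp' uniq_p' _ x_last.
by exists (y :: p'); rewrite /dicycle uniq_p' /= rcons_path yp' -x_last Exy.
Qed.

Variable E : rel V.

Lemma dicycle_or_rank_in (S : seq V) :
  (exists c, dicycle E c && all (mem S) c) \/
  exists h : V -> nat, forall x y, x \in S -> y \in S -> E x y -> h x < h y.
Proof.
pose ES := [rel x y | [&& E x y, x \in S & y \in S]].
case: (dicycle_or_rank ES) => [[c /and3P [nz_c uniq_c cyc_c]] | [h h_lt]].
- left; exists c; rewrite /dicycle nz_c uniq_c.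
  rewrite (sub_cycle _ cyc_c) => [|x y /and3P [] //].
  by apply/allP => x /(next_cycle cyc_c) /and3P [].
- by right; exists h => x y xS yS Exy; apply: h_lt; rewrite /= Exy xS yS.
Qed.

Lemma walk_increasing (S : seq V) (h : V -> nat) (X : seq V) :
  (forall x y, x \in S -> y \in S -> E x y -> h x < h y) ->
  walk E X -> {subset X <= S} -> pairwise (relpre h ltn) X.
Proof.
move=> h_lt; case: X => [// | x p] walk_X sub_X.
rewrite -sorted_pairwise; last by move=> ? ? ?; apply: ltn_trans.
by apply: (sub_in_path (P := mem S) _ _ walk_X); [exact: h_lt | apply/allP].
Qed.

End CyclesAndRanks.

Lemma dicycle_in_walks (V : finType) (E : rel V) m n
    (L : 'I_m -> seq V) (K : 'I_n -> seq V) (U W : seq V) :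
  linkage E L -> linkage E K -> walk E U -> walk E W ->
  avg_deg_ge2 L K (sub_family L U) (sub_family K W) ->
  exists c, dicycle E c && all (mem (U ++ W)) c.
Proof.
move=> [pathL disjL] [pathK disjK] walkU walkW [nz_deg deg_ge].
case: (dicycle_or_rank_in E (U ++ W)) => [// | [h h_lt]].
have d : V by move: walkU; case: (U) => [|x].
have nz_dipath X : dipath E X -> X != [::] by case: X.
have inc X : walk E X -> {subset X <= U ++ W} -> pairwise (relpre h ltn) X.
  exact: walk_increasing h_lt.
have U_sub : {subset U <= U ++ W} by move=> x xU; rewrite mem_cat xU.
have W_sub : {subset W <= U ++ W} by move=> x xW; rewrite mem_cat xW orbT.
have LU a : a \in sub_family L U -> infix (L a) U by rewrite inE.
have KW b : b \in sub_family K W -> infix (K b) W by rewrite inE.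
have := ig_edges_lt_increasing d (inc U walkU U_sub) (inc W walkW W_sub)
  (fun a => nz_dipath _ (pathL a)) (fun b => nz_dipath _ (pathK b))
  disjL disjK LU KW nz_deg.
by rewrite ltnNge deg_ge.
Qed.

Theorem lemma17 (V : finType) (E : rel V)
    (m n : nat) (L : 'I_m -> seq V) (K : 'I_n -> seq V)
    (k alpha beta : nat) (U W : 'I_k -> seq V) :
  linkage E L -> linkage E K ->
  1 <= k -> 1 <= alpha -> 1 <= beta ->
  (forall i, walk E (U i)) -> congestion U alpha ->
  (forall i, walk E (W i)) -> congestion W beta ->
  (forall i, avg_deg_ge2 L K (sub_family L (U i)) (sub_family K (W i))) ->
  exists C : 'I_k -> seq V,
    (forall i, dicycle E (C i)) /\ congestion C (alpha + beta).
Proof.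
move=> linkL linkK _ _ _ walkU congU walkW congW deg.
have cyc i := dicycle_in_walks linkL linkK (walkU i) (walkW i) (deg i).
exists (fun i => xchoose (cyc i)); split => [i | v].
  by case/andP: (xchooseP (cyc i)).
apply: leq_trans _ (leq_add (congU v) (congW v)); rewrite -big_split /=.
apply: leq_sum => i _; rewrite -count_cat.
case/andP: (xchooseP (cyc i)) => /and3P [_ uniq_c _] /allP c_sub.
by apply/leq_uniq_countP => // /c_sub.
Qed.
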